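(* Let $m,n\ge1$ and let $a_{ij}\ge1$ be real numbers ($1\le i\le n$, $1\le j\le m$). Then $$\prod_{i=1}^n\Bigl\{\prod_{j=1}^ma_{ij}-\prod_{j=1}^m(a_{ij}-1)\Bigr\}\ \ge\ \prod_{j=1}^m\prod_{i=1}^na_{ij}-\prod_{j=1}^m\Bigl(\prod_{i=1}^na_{ij}-1\Bigr).$$ Equality holds if and only if one of the following holds: (i) $m=1$ or $n=1$; (ii) there is $j$ with $a_{ij}=1$ for all $i$; (iii) there is $i_0$ with $a_{ij}=1$ for all $i\ne i_0$ and all $j$. *)

From mathcomp Require Import all_boot all_order all_algebra.
From mathcomp Require Import reals.

(* Write a i j = x i j + 1 with x i j >= 0 and expand every product of
   binomials x + 1 into monomials.  A monomial of the whole matrix is indexed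
   by a selection g of entries (a selected entry (i, j) contributes x i j, the
   others 1), and its weight is the product of the selected x i j.  The
   left-hand side is the total weight of the selections that miss an entry in
   every row, the right-hand side that of the selections leaving some column
   empty (these miss an entry in every row as well).  Hence LHS - RHS is the
   total weight of the selections that miss an entry in every row and hit
   every column: it is nonnegative, and it vanishes iff each of them has a
   zero weight.  A selection of one positive entry per column, not all in one
   row, is of that kind; it exists exactly when none of (i)-(iii) holds. *)

From mathcomp Require Import all_boot all_order all_algebra.
From mathcomp Require Import reals.
Import Order.TTheory GRing.Theory Num.Theory.
Local Open Scope ring_scope.

Set Implicit Arguments.
Unset Strict Implicit.
Unset Printing Implicit Defensive.

Section BinomialProducts.
Variables (R : comPzRingType) (I : finType) (F : I -> R).

Definition monomial (t : {ffun I -> bool}) := \prod_i (if t i then F i else 1).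

Lemma prodD1E : \prod_i (F i + 1) = \sum_t monomial t.
Proof.
rewrite -(bigA_distr_bigA (fun i (b : bool) => if b then F i else 1)) /=.
by apply: eq_bigr => i _; rewrite big_bool.
Qed.

Lemma prodD1_sub1 :
  \prod_i (F i + 1) - 1 = \sum_(t | t != [ffun=> false]) monomial t.
Proof.
rewrite prodD1E (bigD1 [ffun=> false]) //= [monomial _]big1 ?(addrC 1) ?addrK // => i _.
by rewrite ffunE.
Qed.

Lemma prodD1_subprod :
  \prod_i (F i + 1) - \prod_i F i = \sum_(t | t != [ffun=> true]) monomial t.
Proof.
rewrite prodD1E (bigD1 [ffun=> true]) //= addrC.
by rewrite [monomial [ffun=> true]](eq_bigr F) ?addrK // => i _; rewrite ffunE.
Qed.

End BinomialProducts.

Lemma ord_size1_eq k (i i' : 'I_k) : k = 1%N -> i = i'.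
Proof.
move=> k1; have lt1 (l : 'I_k) : (l < 1)%N by rewrite -k1.
by apply: val_inj => /=; move: (lt1 i) (lt1 i'); rewrite !ltnS !leqn0 => /eqP-> /eqP->.
Qed.

Lemma sumr_diff_compl (V : zmodType) (T : finType) (P Q : pred T) (F : T -> V) :
    (forall t, ~~ Q t -> P t) ->
  \sum_(t | P t) F t - (\sum_t F t - \sum_(t | Q t) F t)
    = \sum_(t | P t && Q t) F t.
Proof.
move=> nQ_P; rewrite (bigID Q predT) /= addrC addrK (bigID Q P) /=.
rewrite [X in _ + X - _](eq_bigl (fun t => ~~ Q t)) ?addrK // => t.
by apply/andP/idP => [[] | nQt] //; split; first exact: nQ_P.
Qed.

Lemma nonconstant_selector (I J : finType) (P : I -> J -> bool) (j1 j2 : J) :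
    j1 != j2 -> (forall j, exists i, P i j) ->
    (forall i0, exists i j, (i != i0) && P i j) ->
  exists rho : J -> I, (forall j, P (rho j) j) /\ exists j j', rho j != rho j'.
Proof.
move=> j12 hitP offP; have [rho0 rho0P] := fin_all_exists hitP.
have [rho0_j2|] := eqVneq (rho0 j2) (rho0 j1); last by exists rho0; split; eauto.
have [i [k /andP[i_off Pik]]] := offP (rho0 j1).
pose rho j := if j == k then i else rho0 j.
have rhoP j : P (rho j) j by rewrite /rho; case: eqP => [-> // | _].
exists rho; split=> //; exists k.
have [j1_k | j1k] := eqVneq j1 k; last by exists j1; rewrite /rho eqxx (negPf j1k).
by exists j2; rewrite /rho -j1_k eqxx [j2 == j1]eq_sym (negPf j12) rho0_j2.
Qed.

Section SelectionExpansion.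
Variables (R : numDomainType) (n m : nat) (x : 'I_n -> 'I_m -> R).

(* A selection is stored column by column: [g j i] selects the entry (i, j). *)
Local Notation selection := {ffun 'I_m -> {ffun 'I_n -> bool}}.

Definition weight (g : selection) := \prod_j monomial (x^~ j) (g j).

Definition rows_miss (g : selection) := [forall i, [exists j, ~~ g j i]].
Definition cols_hit (g : selection) := [forall j, [exists i, g j i]].

Lemma prod_cols_prodD1 : \prod_j \prod_i (x i j + 1) = \sum_g weight g.
Proof.
under eq_bigr do rewrite prodD1E.
by rewrite bigA_distr_bigA.
Qed.

Lemma prod_cols_prodD1_sub1 :
  \prod_j (\prod_i (x i j + 1) - 1) = \sum_(g | cols_hit g) weight g.
Proof.
under eq_bigr do rewrite prodD1_sub1.
rewrite (bigA_distr_big (predC1 [ffun=> false])); apply: eq_bigl => g.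
apply/ffun_onP/forallP => hit j.
  have := hit j; rewrite !inE; apply: contraR; rewrite negb_exists => /forallP nhit.
  by apply/eqP/ffunP => i; rewrite ffunE; apply/negbTE.
have /existsP[i gji] := hit j; rewrite !inE.
by apply: contraTneq gji => ->; rewrite ffunE.
Qed.

Definition transpose_sel (h : {ffun 'I_n -> {ffun 'I_m -> bool}}) : selection :=
  [ffun j => [ffun i => h i j]].

Lemma transpose_sel_bij : bijective transpose_sel.
Proof.
by exists (fun g : selection => [ffun i => [ffun j => g j i]]) => g;
   apply/ffunP => ?; apply/ffunP => ?; rewrite !ffunE.
Qed.

Lemma prod_rows_prodD1_subprod :
  \prod_i (\prod_j (x i j + 1) - \prod_j x i j)
    = \sum_(g | rows_miss g) weight g.
Proof.
under eq_bigr do rewrite prodD1_subprod.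
rewrite (bigA_distr_big (predC1 [ffun=> true])) (reindex transpose_sel) /=; last first.
  by apply: onW_bij; apply: transpose_sel_bij.
apply: eq_big => [h | h _].
  apply/ffun_onP/forallP => miss i; have := miss i; rewrite !inE.
    apply: contraNT; rewrite negb_exists => /forallP nmiss.
    by apply/eqP/ffunP => j; rewrite ffunE; have := nmiss j; rewrite !ffunE negbK.
  case/existsP=> j; rewrite !ffunE; apply: contraNneq => ->.
  by rewrite ffunE.
rewrite /weight /monomial exchange_big /=.
by apply: eq_bigr => j _; apply: eq_bigr => i _; rewrite !ffunE.
Qed.

Definition admissible (g : selection) := rows_miss g && cols_hit g.

Lemma prod_gap_sum_admissible :
  \prod_i (\prod_j (x i j + 1) - \prod_j x i j)
    - (\prod_j \prod_i (x i j + 1) - \prod_j (\prod_i (x i j + 1) - 1))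
  = \sum_(g | admissible g) weight g.
Proof.
rewrite prod_rows_prodD1_subprod prod_cols_prodD1 prod_cols_prodD1_sub1.
apply: sumr_diff_compl => g; rewrite negb_forall => /existsP[j].
rewrite negb_exists => /forallP nhit; apply/forallP => i.
by apply/existsP; exists j.
Qed.

Hypothesis x_ge0 : forall i j, 0 <= x i j.

Lemma weight_ge0 (g : selection) : 0 <= weight g.
Proof. by apply: prodr_ge0 => j _; apply: prodr_ge0 => i _; case: ifP. Qed.

Lemma weight_eq0 (g : selection) i j : g j i -> x i j = 0 -> weight g = 0.
Proof.
move=> gji xij0; rewrite /weight (bigD1 j) //= /monomial (bigD1 i) //= gji xij0.
by rewrite !mul0r.
Qed.

Lemma admissible_weight_eq0 :
    m = 1%N \/ (exists j, forall i, x i j = 0)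
            \/ (exists i0, forall i j, i != i0 -> x i j = 0) ->
  forall g, admissible g -> weight g = 0.
Proof.
move=> degenerate g /andP[/forallP miss /forallP hit].
case: degenerate => [m1 | [[j col0] | [i0 rows0]]].
- pose j0 := cast_ord (esym m1) ord0.
  have [i gi] := existsP (hit j0).
  by have [j] := existsP (miss i); rewrite (ord_size1_eq j j0 m1) gi.
- by have [i gji] := existsP (hit j); apply: (weight_eq0 gji).
- have [j nhit] := existsP (miss i0); have [i gji] := existsP (hit j).
  by apply: (weight_eq0 gji); apply: rows0; apply: contraNneq nhit => <-.
Qed.

Lemma admissible_weight_gt0 (j1 j2 : 'I_m) :
    j1 != j2 -> (forall j, exists i, x i j != 0) ->
    (forall i0, exists i j, (i != i0) && (x i j != 0)) ->
  exists2 g, admissible g & 0 < weight g.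
Proof.
move=> j12 hit off.
have [rho [rhoP [j1' [j2' rho12]]]] :=
  nonconstant_selector (P := fun i j => x i j != 0) j12 hit off.
pose g : selection := [ffun j => [ffun i => i == rho j]].
have gE j i : g j i = (i == rho j) by rewrite !ffunE.
exists g.
  apply/andP; split; apply/forallP => k; apply/existsP.
    have [<- | ne] := eqVneq (rho j1') k; last by exists j1'; rewrite gE eq_sym ne.
    by exists j2'; rewrite gE.
  by exists (rho k); rewrite gE.
apply: prodr_gt0 => j _; rewrite /monomial (bigD1 (rho j)) //= gE eqxx.
rewrite big1 => [|i ne]; last by rewrite gE (negPf ne).
by rewrite mulr1 lt0r rhoP x_ge0.
Qed.

Lemma sum_admissible_eq0 : (0 < m)%N ->
  \sum_(g | admissible g) weight g = 0 <->
  m = 1%N \/ (exists j, forall i, x i j = 0)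
          \/ (exists i0, forall i j, i != i0 -> x i j = 0).
Proof.
move=> m_gt0; split=> [sum0 | degenerate]; last first.
  by apply: big1 => g; apply: admissible_weight_eq0.
have [m1 | m_ne1] := eqVneq m 1%N; [by left | right].
have [/existsP[j /forallP col0] | no_col0] := boolP [exists j, [forall i, x i j == 0]].
  by left; exists j => i; apply/eqP.
have [/existsP[i0 /forallP row0] | no_row0] :=
  boolP [exists i0, [forall i, [forall j, (i != i0) ==> (x i j == 0)]]].
  right; exists i0 => i j ne.
  by have /forallP/(_ j)/implyP/(_ ne)/eqP := row0 i.
have hit j : exists i, x i j != 0.
  by move: no_col0; rewrite negb_exists => /forallP/(_ j); rewrite negb_forall => /existsP.
have off i0 : exists i j, (i != i0) && (x i j != 0).
  move: no_row0; rewrite negb_exists => /forallP/(_ i0); rewrite negb_forall.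
  case/existsP=> i; rewrite negb_forall => /existsP[j]; rewrite negb_imply.
  by exists i, j.
have m_gt1 : (1 < m)%N by rewrite ltn_neqAle eq_sym m_ne1.
have [g adm] := admissible_weight_gt0 (j1 := Ordinal m_gt0) (j2 := Ordinal m_gt1) isT hit off.
by rewrite (psumr_eq0P (fun g _ => weight_ge0 g) sum0) ?ltxx.
Qed.

End SelectionExpansion.

Theorem mainTheorem3 (R : realType) (m n : nat) (hm : (1 <= m)%N) (hn : (1 <= n)%N)
  (a : 'I_n -> 'I_m -> R) (ha : forall i j, 1 <= a i j) :
  let LHS := \prod_(i < n) (\prod_(j < m) a i j - \prod_(j < m) (a i j - 1)) in
  let RHS := \prod_(j < m) (\prod_(i < n) a i j)
             - \prod_(j < m) (\prod_(i < n) a i j - 1) in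
  LHS >= RHS /\
  (LHS = RHS <->
     (m = 1%N \/ n = 1%N
      \/ (exists j : 'I_m, forall i : 'I_n, a i j = 1)
      \/ (exists i0 : 'I_n, forall (i : 'I_n) (j : 'I_m), i != i0 -> a i j = 1))).
Proof.
move=> LHS RHS; pose x i j := a i j - 1.
have x_ge0 i j : 0 <= x i j by rewrite subr_ge0.
have aE i j : x i j + 1 = a i j by rewrite subrK.
have gap : LHS - RHS = \sum_(g | admissible g) weight x g.
  rewrite -prod_gap_sum_admissible /LHS /RHS; apply/esym.
  under [X in X - _ = _]eq_bigr do under eq_bigr do rewrite aE.
  under [X in _ - (X - _) = _]eq_bigr do under eq_bigr do rewrite aE.
  by under [X in _ - (_ - X) = _]eq_bigr do under eq_bigr do rewrite aE.
have xE i j : x i j = 0 <-> a i j = 1.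
  by rewrite /x; split=> [/eqP | ->]; rewrite ?subrr // subr_eq0 => /eqP.
split; first by rewrite -subr_ge0 gap; apply: sumr_ge0 => g _; apply: weight_ge0.
have -> : LHS = RHS <-> LHS - RHS = 0.
  by split=> [-> | /eqP]; [rewrite subrr | rewrite subr_eq0 => /eqP].
rewrite gap (sum_admissible_eq0 x_ge0 hm).
split=> [[m1 | [[j col] | [i0 row]]] | [m1 | [n1 | [[j col] | [i0 row]]]]].
- by left.
- by right; right; left; exists j => i; apply/xE.
- by do 3 right; exists i0 => i j /row/xE.
- by left.
- by right; right; exists (Ordinal hn) => i j; rewrite (ord_size1_eq i (Ordinal hn) n1) eqxx.
- by right; left; exists j => i; apply/xE.
- by right; right; exists i0 => i j /row/xE.
Qed.
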